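(* Let $n\geq 2$ and let $B$ be a subgroup of $P\Sigma_n$. If the homomorphism $\tau_1^{(B)}:gr^1(B)=B^{ab}\to IA_n^{ab}$ (induced by the inclusion $B\subseteq IA_n$) is injective, then $\mathcal{A}_n(2)\cap B=\Gamma_2(B)$.
   Context: $F_n$ is the free group on $x_1,\dots,x_n$; $\Gamma_k$ denotes the lower central series ($\Gamma_1(G)=G$, $\Gamma_{k+1}(G)=(\Gamma_k(G),G)$), and $\mathcal{A}_n(k)=\{\phi\in\mathrm{Aut}(F_n): g^{-1}\phi(g)\in\Gamma_{k+1}(F_n)\ \forall g\in F_n\}$; $IA_n=\mathcal{A}_n(1)$. $P\Sigma_n$ (the McCool group) is the subgroup of $\mathrm{Aut}(F_n)$ generated by the automorphisms $\xi_{i,j}$, $1\leq i\neq j\leq n$, where $\xi_{i,j}(x_i)=x_j^{-1}x_ix_j$ and $\xi_{i,j}(x_l)=x_l$ for $l\neq i$. The map $\tau_1^{(B)}$ is the composition $gr^1(B)\to (B\cap\mathcal{A}_n(1))/(B\cap\mathcal{A}_n(2))\hookrightarrow \mathcal{A}_n(1)/\mathcal{A}_n(2)=IA_n^{ab}$. *)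

From mathcomp Require Import all_boot.
Set Implicit Arguments. Unset Strict Implicit. Unset Printing Implicit Defensive.

Section FreeGroup.
Variable n : nat.

(* a letter (i, false) is x_i, (i, true) is x_i^{-1} *)
Definition letter := ('I_n * bool)%type.
Definition word := seq letter.
Definition linv (a : letter) : letter := (a.1, ~~ a.2).

Fixpoint reducedb (w : word) : bool :=
  match w with
  | a :: ((b :: _) as w') => (b != linv a) && reducedb w'
  | _ => true
  end.

Definition ccons (a : letter) (w : word) : word :=
  if w is b :: w' then (if b == linv a then w' else a :: w) else [:: a].
Definition reduce (w : word) : word := foldr ccons [::] w.

Definition fone : word := [::].
Definition fmul (u v : word) : word := reduce (u ++ v).
Definition finv (u : word) : word := rev (map linv u).
Definition fcomm (g h : word) : word := fmul (fmul (finv g) (finv h)) (fmul g h).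

Inductive fgen (S : word -> Prop) : word -> Prop :=
  | fgen_base w : S w -> fgen S w
  | fgen_one : fgen S fone
  | fgen_mul u v : fgen S u -> fgen S v -> fgen S (fmul u v)
  | fgen_inv u : fgen S u -> fgen S (finv u).

(* lcs k = Gamma_{k+1}(F_n); lcs 0 = F_n *)
Fixpoint lcs (k : nat) : word -> Prop :=
  match k with
  | 0 => fun w => reducedb w
  | k'.+1 => fgen (fun w => exists g h, lcs k' g /\ reducedb h /\ w = fcomm g h)
  end.
Definition Gamma (k : nat) := lcs k.-1.

Definition endo := {ffun 'I_n -> word}.
Definition lapp (phi : endo) (a : letter) : word :=
  if a.2 then finv (phi a.1) else phi a.1.
Definition app (phi : endo) (w : word) : word := reduce (flatten (map (lapp phi) w)).
Definition ecomp (phi psi : endo) : endo := [ffun i => app phi (psi i)].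
Definition eid : endo := [ffun i => [:: (i, false)]].
Definition reduced_endo (phi : endo) := forall i, reducedb (phi i).
Definition is_inverse (psi phi : endo) :=
  reduced_endo psi /\ ecomp phi psi = eid /\ ecomp psi phi = eid.
Definition is_aut (phi : endo) := reduced_endo phi /\ exists psi, is_inverse psi phi.

Inductive agen (S : endo -> Prop) : endo -> Prop :=
  | agen_base phi : S phi -> agen S phi
  | agen_one : agen S eid
  | agen_comp phi psi : agen S phi -> agen S psi -> agen S (ecomp phi psi)
  | agen_inv phi psi : agen S phi -> is_inverse psi phi -> agen S psi.

Definition xi (i j : 'I_n) : endo :=
  [ffun l => if l == i then [:: (j, true); (i, false); (j, false)] else [:: (l, false)]].

Definition PSigma : endo -> Prop := agen (fun phi => exists i j, i != j /\ phi = xi i j).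

Definition Andreadakis (k : nat) (phi : endo) :=
  is_aut phi /\ forall g, reducedb g -> Gamma k.+1 (fmul (finv g) (app phi g)).

Definition is_subgroup (B : endo -> Prop) :=
  B eid /\ (forall phi psi, B phi -> B psi -> B (ecomp phi psi)) /\
  (forall phi psi, B phi -> is_inverse psi phi -> B psi).

Definition DerivedSub (B : endo -> Prop) : endo -> Prop :=
  agen (fun chi => exists phi psi phi' psi',
          B phi /\ B psi /\ is_inverse phi' phi /\ is_inverse psi' psi /\
          chi = ecomp (ecomp phi' psi') (ecomp phi psi)).

(* injectivity of tau_1^(B) : B/Gamma_2(B) -> A_n(1)/A_n(2), phi Gamma_2(B) |-> phi A_n(2):
   phi A_n(2) = psi A_n(2) implies phi Gamma_2(B) = psi Gamma_2(B) *)
Definition tau1_injective (B : endo -> Prop) :=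
  forall phi psi phi', B phi -> B psi -> is_inverse phi' phi ->
    Andreadakis 2 (ecomp phi' psi) -> DerivedSub B (ecomp phi' psi).

End FreeGroup.

(* An element of B in A_n(2) has trivial image under tau_1^(B), so injectivity puts it
   in Gamma_2(B).  Conversely B lies in the McCool group, hence (the xi_{i,j} being in
   IA_n) in A_n(1), and it suffices that [A_n(1), A_n(1)] is contained in A_n(2).  Write
   phi x = x a and psi x = x b with a, b in Gamma_2(F_n).  Since IA_n acts trivially on
   Gamma_2/Gamma_3 (commutator calculus on the generators [x, y] of Gamma_2), one gets
   phi (psi x) = x a b and psi (phi x) = x b a modulo Gamma_3, and a b = b a modulo
   Gamma_3; applying the inverses keeps the error term in Gamma_3. *)

From Pilot Require Import Defs.
From mathcomp Require Import all_boot.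
From HB Require Import structures.
Set Implicit Arguments. Unset Strict Implicit. Unset Printing Implicit Defensive.

(* fingraph, exported by [all_boot], also defines [finv]. *)
Notation finv := Pilot.Defs.finv.

Section FreeReduction.
Variable n : nat.
Implicit Types (a b : letter n) (u v w : word n).

Lemma linvK : involutive (@linv n).
Proof. by case=> i b; rewrite /linv /= negbK. Qed.

Lemma reducedb_sorted w : reducedb w = sorted (fun a b => b != linv a) w.
Proof. by case: w => // a w; elim: w a => //= b w IHw a; rewrite IHw. Qed.

Lemma reducedb_behead a w : reducedb (a :: w) -> reducedb w.
Proof. by case: w => //= b w /andP[]. Qed.

Lemma reducedb_ccons a w : reducedb w -> reducedb (ccons a w).
Proof.
case: w => [|b w] //= Rw; case: ifP => [_|/negbT b_a]; first exact: reducedb_behead Rw.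
by rewrite [reducedb _]/= b_a.
Qed.

Lemma reducedb_reduce w : reducedb (reduce w).
Proof. by elim: w => //= a w; apply: reducedb_ccons. Qed.

Lemma ccons_linv a w : reducedb w -> ccons a (ccons (linv a) w) = w.
Proof.
case: w => [|b w] Rw; first by rewrite /= eqxx.
rewrite {2}/ccons; case: ifP => [/eqP b_a|_]; last by rewrite /= eqxx.
subst b; case: w Rw => [|c w] /=; first by rewrite linvK.
by rewrite !linvK => /andP[/negbTE-> _].
Qed.

Lemma reduce_id w : reducedb w -> reduce w = w.
Proof.
elim: w => //= a w IHw Rw; rewrite IHw ?(reducedb_behead Rw) //.
by case: w Rw {IHw} => //= b w /andP[/negbTE-> _].
Qed.

Lemma reduce_cat u v : reduce (u ++ v) = foldr (@ccons n) (reduce v) u.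
Proof. by rewrite /reduce foldr_cat. Qed.

Lemma foldr_ccons_reduce w u :
  reducedb w -> foldr (@ccons n) w (reduce u) = foldr (@ccons n) w u.
Proof.
move=> Rw; have Rfold v : reducedb (foldr (@ccons n) w v).
  by elim: v => //= a v; apply: reducedb_ccons.
elim: u => //= a u <-; have := reducedb_reduce u.
case: (reduce u) => [|b r] //= Rbr; case: ifP => [/eqP b_a|_] //=.
by rewrite b_a ccons_linv.
Qed.

Lemma reduce_catl u v : reduce (reduce u ++ v) = reduce (u ++ v).
Proof. by rewrite !reduce_cat foldr_ccons_reduce // reducedb_reduce. Qed.

Lemma reduce_catr u v : reduce (u ++ reduce v) = reduce (u ++ v).
Proof. by rewrite !reduce_cat reduce_id // reducedb_reduce. Qed.

Lemma finvK : involutive (@finv n).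
Proof.
move=> u; rewrite /finv map_rev revK -map_comp map_id_in // => a _.
exact: linvK.
Qed.

Lemma reduce_cat_finv u v : reduce (u ++ finv u ++ v) = reduce v.
Proof.
rewrite catA reduce_cat; elim: u (reduce v) (reducedb_reduce v) => //= a u IHu w Rw.
rewrite /finv /= rev_cons -cats1 catA foldr_cat /= IHu ?ccons_linv //.
exact: reducedb_ccons.
Qed.

Lemma reduce_finv_cat u v : reduce (finv u ++ u ++ v) = reduce v.
Proof. by rewrite -{2}(finvK u) reduce_cat_finv. Qed.

Lemma reducedb_finv u : reducedb u -> reducedb (finv u).
Proof.
rewrite !reducedb_sorted /finv rev_sorted sorted_map; apply: sub_sorted => a b.
by rewrite /= linvK eq_sym.
Qed.

Lemma reduce_finv u : reduce (finv u) = finv (reduce u).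
Proof.
rewrite -(reduce_finv_cat (reduce u) (finv u)) -reduce_catr reduce_catl.
rewrite -(cats0 (finv u)) reduce_cat_finv cats0 /=.
by rewrite reduce_id // reducedb_finv // reducedb_reduce.
Qed.

End FreeReduction.

Section Substitution.
Variable n : nat.
Implicit Types (phi psi : endo n) (a : letter n) (u v w : word n).

Definition expand phi w : word n := flatten (map (lapp phi) w).

Lemma expand_cat phi u v : expand phi (u ++ v) = expand phi u ++ expand phi v.
Proof. by rewrite /expand map_cat flatten_cat. Qed.

Lemma lapp_linv phi a : lapp phi (linv a) = finv (lapp phi a).
Proof. by case: a => i [] //; rewrite /lapp /= finvK. Qed.

Lemma expand_finv phi u : expand phi (finv u) = finv (expand phi u).
Proof.
rewrite /expand /finv map_flatten rev_flatten -!map_comp; congr flatten.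
by rewrite map_rev -map_comp; congr rev; apply: eq_map => a /=; rewrite lapp_linv.
Qed.

Lemma app_cat phi u v : app phi (u ++ v) = fmul (app phi u) (app phi v).
Proof. by rewrite /app -/(expand _ _) expand_cat /fmul reduce_catl reduce_catr. Qed.

Lemma app_reduce phi w : app phi (reduce w) = app phi w.
Proof.
elim: w => //= a w IHw; rewrite -cat1s app_cat -IHw -app_cat.
case: (reduce w) => [|b r] //=; case: ifP => [/eqP->|_] //.
by rewrite /app /= lapp_linv reduce_cat_finv.
Qed.

Lemma app_fmul phi u v : app phi (fmul u v) = fmul (app phi u) (app phi v).
Proof. by rewrite app_reduce app_cat. Qed.

Lemma app_finv phi u : app phi (finv u) = finv (app phi u).
Proof. by rewrite /app -!/(expand _ _) expand_finv reduce_finv. Qed.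

Lemma app_reducedb phi w : reducedb (app phi w).
Proof. exact: reducedb_reduce. Qed.

Lemma app_generator phi (i : 'I_n) : app phi [:: (i, false)] = reduce (phi i).
Proof. by rewrite /app /= cats0. Qed.

Lemma app_ecomp phi psi w : app (ecomp phi psi) w = app phi (app psi w).
Proof.
rewrite app_reduce; elim: w => // a w IHw.
rewrite -cat1s !app_cat IHw /expand /=; congr fmul.
case: a => i []; rewrite [LHS]/app /= cats0 /lapp ffunE ?app_finv.
  by rewrite reduce_id // reducedb_finv // app_reducedb.
by rewrite reduce_id // app_reducedb.
Qed.

Lemma app_eid w : app (eid n) w = reduce w.
Proof.
rewrite /app; congr reduce; elim: w => //= a w ->.
by case: a => i [] //=; rewrite /lapp /= ffunE.
Qed.

End Substitution.

Definition free_group n := {w : word n | reducedb w}.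
HB.instance Definition _ n := Choice.on (free_group n).

Section FreeGroupLaws.
Variable n : nat.
Implicit Types x y z : free_group n.

Definition fg_one : free_group n := exist _ (fone n) isT.
Definition fg_mul x y : free_group n := exist _ (fmul (val x) (val y)) (reducedb_reduce _).
Definition fg_inv x : free_group n := exist _ (finv (val x)) (reducedb_finv (valP x)).

Lemma fg_mulA : associative fg_mul.
Proof. by move=> x y z; apply: val_inj; rewrite /= /fmul reduce_catl reduce_catr catA. Qed.

Lemma fg_mul1g : left_id fg_one fg_mul.
Proof. by move=> x; apply: val_inj; rewrite /= /fmul reduce_id // (valP x). Qed.

Lemma fg_mulg1 : right_id fg_one fg_mul.
Proof. by move=> x; apply: val_inj; rewrite /= /fmul cats0 reduce_id // (valP x). Qed.

Lemma fg_mulVg : left_inverse fg_one fg_inv fg_mul.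
Proof. by move=> x; apply: val_inj; rewrite /= /fmul -[_ ++ _]cats0 -catA reduce_finv_cat. Qed.

Lemma fg_mulgV : right_inverse fg_one fg_inv fg_mul.
Proof. by move=> x; apply: val_inj; rewrite /= /fmul -[_ ++ _]cats0 -catA reduce_cat_finv. Qed.

End FreeGroupLaws.

HB.instance Definition _ n := isGroup.Build (free_group n)
  (@fg_mulA n) (@fg_mul1g n) (@fg_mulg1 n) (@fg_mulVg n) (@fg_mulgV n).

Definition fmorph n (phi : endo n) (x : free_group n) : free_group n :=
  exist _ (app phi (val x)) (app_reducedb _ _).

Lemma fmorphF n (phi : endo n) : {morph fmorph phi : x y / (x / y)%g}.
Proof. by move=> x y; apply: val_inj; rewrite /= app_fmul app_finv. Qed.

HB.instance Definition _ n phi := isGroupMorphism.Build _ _ (@fmorph n phi) (fmorphF phi).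

Section Endomorphisms.
Variable n : nat.
Implicit Types (x : free_group n) (phi psi : endo n).
Local Open Scope group_scope.

Definition X (i : 'I_n) : free_group n := exist _ [:: (i, false)] isT.

Lemma fmorph_ecomp phi psi x : fmorph (ecomp phi psi) x = fmorph phi (fmorph psi x).
Proof. by apply: val_inj; rewrite /= app_ecomp. Qed.

Lemma fmorph_eid x : fmorph (eid n) x = x.
Proof. by apply: val_inj; rewrite /= app_eid reduce_id // (valP x). Qed.

Lemma fmorph_X phi i x : phi i = val x -> fmorph phi (X i) = x.
Proof.
by move=> phi_i; apply: val_inj; rewrite /= app_generator phi_i reduce_id // (valP x).
Qed.

Lemma ecomp_eid_cancel phi psi : ecomp phi psi = eid n -> cancel (fmorph psi) (fmorph phi).
Proof. by move=> E x; rewrite -fmorph_ecomp E fmorph_eid. Qed.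

Lemma ecomp_eq_eid phi psi :
  (forall i, fmorph phi (fmorph psi (X i)) = X i) -> ecomp phi psi = eid n.
Proof.
move=> fixX; apply/ffunP => i; have := congr1 val (fixX i).
by rewrite !ffunE /= app_generator app_reduce.
Qed.

Lemma ecomp_eidl phi : reduced_endo phi -> ecomp (eid n) phi = phi.
Proof. by move=> Rphi; apply/ffunP => i; rewrite ffunE app_eid reduce_id. Qed.

Lemma eid_reduced : reduced_endo (eid n).
Proof. by move=> i; rewrite ffunE. Qed.

Lemma ecomp_reduced phi psi : reduced_endo (ecomp phi psi).
Proof. by move=> i; rewrite ffunE app_reducedb. Qed.

Lemma is_inverse_eid : is_inverse (eid n) (eid n).
Proof. by split; [exact: eid_reduced | rewrite ecomp_eidl //; exact: eid_reduced]. Qed.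

End Endomorphisms.

Section LowerCentralSeries.
Variable n : nat.
Implicit Types (x y : free_group n) (phi : endo n).
Local Open Scope group_scope.

Definition in_lcs k x := lcs k (val x).

Lemma lcs_reducedb k (w : word n) : lcs k w -> reducedb w.
Proof.
case: k => //= k; elim=> [_ [g [h [_ [_ ->]]]]|//|u v *|u _ /reducedb_finv //].
  all: exact: reducedb_reduce.
Qed.

Lemma val_commg x y : val [~ x, y] = fcomm (val x) (val y).
Proof. by rewrite commgEl conjgE mulgA. Qed.

Lemma in_lcs0 x : in_lcs 0 x.
Proof. exact: valP. Qed.

Lemma in_lcs1 k : in_lcs k 1.
Proof. by case: k => //= k; apply: fgen_one. Qed.

Lemma in_lcsM k x y : in_lcs k x -> in_lcs k y -> in_lcs k (x * y).
Proof. by case: k => [|k] Hx Hy; [exact: valP | exact: fgen_mul]. Qed.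

Lemma in_lcsV k x : in_lcs k x -> in_lcs k x^-1.
Proof. by case: k => [|k] Hx; [exact: valP | exact: fgen_inv]. Qed.

Lemma in_lcsR k x y : in_lcs k x -> in_lcs k.+1 [~ x, y].
Proof.
by move=> Hx; apply: fgen_base; exists (val x), (val y); rewrite val_commg (valP y).
Qed.

Lemma lcs_ind k (P : free_group n -> Prop) :
  P 1 -> (forall x y, P x -> P y -> P (x * y)) -> (forall x, P x -> P x^-1) ->
  (forall x y, in_lcs k x -> P [~ x, y]) -> forall x, in_lcs k.+1 x -> P x.
Proof.
move=> P1 PM PV PR x Hx.
have [y Py /val_inj <- //] : exists2 y, P y & val y = val x.
elim: Hx => [w0 [g [h [Hg [Rh ->]]]]| |u v _ [x1 Px1 <-] _ [x2 Px2 <-]|u _ [x1 Px1 <-]].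
- exists [~ exist _ g (lcs_reducedb Hg) : free_group n, exist _ h Rh]; first exact: PR.
  exact: val_commg.
- by exists 1%g.
- by exists (x1 * x2); [exact: PM|].
- by exists x1^-1; [exact: PV|].
Qed.

Lemma in_lcsJ k x y : in_lcs k x -> in_lcs k (x ^ y).
Proof.
elim: k x y => [|k IHk] x y Hx; first exact: in_lcs0.
move: x Hx y; apply: lcs_ind => [y|x1 x2 H1 H2 y|x1 H1 y|x1 x2 H1 y].
- by rewrite conj1g; apply: in_lcs1.
- by rewrite conjMg; apply: in_lcsM.
- by rewrite conjVg; apply: in_lcsV.
- by rewrite conjRg; apply: in_lcsR; apply: IHk.
Qed.

Lemma in_lcs_fmorph phi k x : in_lcs k x -> in_lcs k (fmorph phi x).
Proof.
elim: k x => [|k IHk] x; first by move=> _; apply: in_lcs0.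
move: x; apply: lcs_ind => [|x1 x2 H1 H2|x1 H1|x1 x2 H1].
- by rewrite gmulf1; apply: in_lcs1.
- by rewrite gmulfM; apply: in_lcsM.
- by rewrite gmulfV; apply: in_lcsV.
- by rewrite gmulfR; apply: in_lcsR; apply: IHk.
Qed.

End LowerCentralSeries.

Section CommutatorIdentities.
Variable G : groupType.
Implicit Types x y z : G.
Local Open Scope group_scope.

Lemma commMgJ x y z : [~ x * y, z] = [~ x, z] ^ y * [~ y, z].
Proof. by rewrite !commgEl !conjgE !gnorm. Qed.

Lemma commgMJ x y z : [~ x, y * z] = [~ x, z] * [~ x, y] ^ z.
Proof. by rewrite !commgEl !conjgE !gnorm. Qed.

End CommutatorIdentities.

Section CongruenceModuloLcs.
Variable n : nat.
Implicit Types x y z a b c : free_group n.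
Local Open Scope group_scope.

Definition eq_lcs k x y := in_lcs k (x^-1 * y).

Lemma eq_lcs_refl k x : eq_lcs k x x.
Proof. by rewrite /eq_lcs mulVg; apply: in_lcs1. Qed.

Lemma eq_lcs_sym k x y : eq_lcs k x y -> eq_lcs k y x.
Proof. by move/in_lcsV; rewrite invgM invgK. Qed.

Lemma eq_lcs_trans k y x z : eq_lcs k x y -> eq_lcs k y z -> eq_lcs k x z.
Proof. by move=> Hxy Hyz; rewrite /eq_lcs -(mulVKg y z) mulgA; apply: in_lcsM. Qed.

Lemma eq_lcsM k x x' y y' : eq_lcs k x x' -> eq_lcs k y y' -> eq_lcs k (x * y) (x' * y').
Proof.
move=> Hx Hy; rewrite /eq_lcs (_ : _ * _ = (x^-1 * x') ^ y * (y^-1 * y')).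
  by apply: in_lcsM => //; apply: in_lcsJ.
by rewrite conjgE !gnorm.
Qed.

Lemma eq_lcsV k x y : eq_lcs k x y -> eq_lcs k x^-1 y^-1.
Proof.
move=> Hxy; rewrite /eq_lcs (_ : _ * _ = ((x^-1 * y)^-1) ^ y^-1).
  exact/in_lcsJ/in_lcsV.
by rewrite conjgE !gnorm.
Qed.

Lemma in_lcs_eq1 k c : in_lcs k c -> eq_lcs k c 1.
Proof. by rewrite /eq_lcs mulg1; apply: in_lcsV. Qed.

Lemma eq_lcs_conj k a z : in_lcs k a -> eq_lcs k.+1 (z ^ a) z.
Proof.
move=> Ha; rewrite /eq_lcs (_ : _ * _ = [~ a, z]); first exact: in_lcsR.
by rewrite commgEl !conjgE !gnorm.
Qed.

Lemma eq_lcs_commute k a z : in_lcs k a -> eq_lcs k.+1 (a * z) (z * a).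
Proof.
move=> Ha; rewrite /eq_lcs (_ : _ * _ = [~ a, z]^-1); first exact/in_lcsV/in_lcsR.
by rewrite commgEl !conjgE !gnorm.
Qed.

Lemma eq_lcs_commg x y a b :
  in_lcs 1 a -> in_lcs 1 b -> eq_lcs 2 [~ x * a, y * b] [~ x, y].
Proof.
move=> Ha Hb; rewrite commMgJ commgMJ.
apply: (@eq_lcs_trans _ (([~ x, b] * [~ x, y] ^ b) * 1)).
  by apply: eq_lcsM; [exact: eq_lcs_conj | exact/in_lcs_eq1/in_lcsR].
rewrite mulg1 -[X in eq_lcs _ _ X]mul1g; apply: eq_lcsM; last exact: eq_lcs_conj.
by rewrite -invgR; apply/in_lcs_eq1/in_lcsV/in_lcsR.
Qed.

End CongruenceModuloLcs.

Section IA.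
Variable n : nat.
Implicit Types (x y : free_group n) (phi psi : endo n).
Local Open Scope group_scope.

Definition IA k phi := forall x, eq_lcs k x (fmorph phi x).

Lemma AndreadakisE k phi : Andreadakis k phi <-> is_aut phi /\ IA k phi.
Proof.
split=> -[Aphi IAphi]; split=> //.
  by move=> x; apply: IAphi (valP x).
by move=> g Rg; apply: IAphi (exist _ g Rg).
Qed.

Lemma IA_eid k : IA k (eid n).
Proof. by move=> x; rewrite fmorph_eid; apply: eq_lcs_refl. Qed.

Lemma IA_ecomp k phi psi : IA k phi -> IA k psi -> IA k (ecomp phi psi).
Proof. by move=> IAphi IApsi x; rewrite fmorph_ecomp; apply: eq_lcs_trans (IAphi _). Qed.

Lemma IA_cancel k phi psi : IA k phi -> ecomp phi psi = eid n -> IA k psi.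
Proof.
move=> IAphi Kphi x; apply: eq_lcs_sym.
by have := IAphi (fmorph psi x); rewrite (ecomp_eid_cancel Kphi).
Qed.

Lemma IA_generators k phi : (forall i, eq_lcs k (X i) (fmorph phi (X i))) -> IA k phi.
Proof.
move=> IAX [w Rw]; elim: w Rw => [|a w IHw] Rw.
  rewrite (_ : exist _ [::] Rw = 1 :> free_group n) ?gmulf1; last exact: val_inj.
  exact: eq_lcs_refl.
have -> : exist _ (a :: w) Rw =
          (exist _ [:: a] isT : free_group n) * exist _ w (reducedb_behead Rw).
  by apply: val_inj; rewrite /= /fmul reduce_id.
rewrite gmulfM; apply: eq_lcsM (IHw _); case: a {Rw IHw} => i [].
  by rewrite (_ : exist _ _ _ = (X i)^-1) ?gmulfV; [exact/eq_lcsV/IAX | exact: val_inj].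
exact: IAX.
Qed.

Lemma IA1_fmorph_lcs1 phi y : IA 1 phi -> in_lcs 1 y -> eq_lcs 2 y (fmorph phi y).
Proof.
move=> IAphi; move: y; apply: lcs_ind => [|x1 x2 H1 H2|x1 H1|x y _].
- by rewrite gmulf1; apply: eq_lcs_refl.
- by rewrite gmulfM; apply: eq_lcsM.
- by rewrite gmulfV; apply: eq_lcsV.
have := eq_lcs_commg x y (IAphi x) (IAphi y).
by rewrite !mulVKg gmulfR => /eq_lcs_sym.
Qed.

Lemma IA1_fmorph_commute phi psi x : IA 1 phi -> IA 1 psi ->
  eq_lcs 2 (fmorph phi (fmorph psi x)) (fmorph psi (fmorph phi x)).
Proof.
move=> IAphi IApsi.
set a := x^-1 * fmorph phi x; have Ha : in_lcs 1 a := IAphi x.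
set b := x^-1 * fmorph psi x; have Hb : in_lcs 1 b := IApsi x.
have [Ea Eb] : fmorph phi x = x * a /\ fmorph psi x = x * b by rewrite !mulVKg.
clearbody a b.
rewrite Eb Ea !gmulfM /= Ea Eb -!mulgA; apply: eq_lcsM (eq_lcs_refl _ _) _.
apply: (eq_lcs_trans (y := a * b)).
  by apply: eq_lcsM (eq_lcs_refl _ _) _; apply/eq_lcs_sym/IA1_fmorph_lcs1.
apply: (eq_lcs_trans (y := b * a)); first exact: eq_lcs_commute.
by apply: eq_lcsM (eq_lcs_refl _ _) _; apply: IA1_fmorph_lcs1.
Qed.

Lemma IA2_commutator phi psi phi' psi' : IA 1 phi -> IA 1 psi ->
  ecomp phi' phi = eid n -> ecomp psi' psi = eid n ->
  IA 2 (ecomp (ecomp phi' psi') (ecomp phi psi)).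
Proof.
move=> IAphi IApsi Kphi Kpsi x; rewrite !fmorph_ecomp.
have [c Hc ->] : exists2 c, in_lcs 2 c &
    fmorph phi (fmorph psi x) = fmorph psi (fmorph phi x) * c.
  exists ((fmorph psi (fmorph phi x))^-1 * fmorph phi (fmorph psi x)).
    exact: eq_lcs_sym (IA1_fmorph_commute x IAphi IApsi).
  by rewrite mulVKg.
rewrite !gmulfM /= (ecomp_eid_cancel Kpsi) (ecomp_eid_cancel Kphi).
by rewrite /eq_lcs mulKg; do 2 apply: in_lcs_fmorph.
Qed.

End IA.

Section Subgroups.
Variable n : nat.
Implicit Types (phi psi : endo n) (S P : endo n -> Prop).

Lemma agen_sub S P :
  is_subgroup P -> (forall phi, S phi -> P phi) -> forall phi, agen S phi -> P phi.
Proof.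
move=> [P1 [PM PV]] SP phi.
by elim=> [psi /SP|//|phi1 phi2 _ P1' _ P2'|phi1 psi _ Pphi1 inv];
  [|exact: PM|exact: PV inv].
Qed.

Lemma is_subgroup_aut : is_subgroup (@is_aut n).
Proof.
split; [|split].
- by split; [exact: eid_reduced | exists (eid n); exact: is_inverse_eid].
- move=> phi psi [_ [phi' [_ [Kphi Kphi']]]] [_ [psi' [_ [Kpsi Kpsi']]]].
  split; first exact: ecomp_reduced.
  exists (ecomp psi' phi'); split; first exact: ecomp_reduced.
  split.
  + apply: ecomp_eq_eid => i; rewrite !fmorph_ecomp.
    by rewrite (ecomp_eid_cancel Kpsi) (ecomp_eid_cancel Kphi).
  + apply: ecomp_eq_eid => i; rewrite !fmorph_ecomp.
    by rewrite (ecomp_eid_cancel Kphi') (ecomp_eid_cancel Kpsi').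
- by move=> phi psi [Rphi _] [Rpsi [K K']]; split=> //; exists phi.
Qed.

Lemma is_subgroup_IA k : is_subgroup (@IA n k).
Proof.
split; [exact: IA_eid | split; first exact: IA_ecomp].
by move=> phi psi IAphi [_ [K _]]; apply: IA_cancel K.
Qed.

Lemma is_subgroup_Andreadakis k : is_subgroup (@Andreadakis n k).
Proof.
have [aut1 [autM autV]] := is_subgroup_aut; have [IA1 [IAM IAV]] := is_subgroup_IA k.
split; [|split].
- by apply/AndreadakisE.
- move=> phi psi /AndreadakisE[Aphi IAphi] /AndreadakisE[Apsi IApsi].
  by apply/AndreadakisE; split; [exact: autM | exact: IAM].
- move=> phi psi /AndreadakisE[Aphi IAphi] inv.
  by apply/AndreadakisE; split; [exact: autV inv | exact: IAV inv].
Qed.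

Lemma Andreadakis2_commutator phi psi phi' psi' :
  Andreadakis 1 phi -> Andreadakis 1 psi -> is_inverse phi' phi -> is_inverse psi' psi ->
  Andreadakis 2 (ecomp (ecomp phi' psi') (ecomp phi psi)).
Proof.
have [_ [autM autV]] := is_subgroup_aut.
move=> /AndreadakisE[Aphi IAphi] /AndreadakisE[Apsi IApsi] inv_phi inv_psi.
apply/AndreadakisE; split.
  have Aphi' := autV _ _ Aphi inv_phi; have Apsi' := autV _ _ Apsi inv_psi.
  exact: autM _ _ (autM _ _ Aphi' Apsi') (autM _ _ Aphi Apsi).
exact: IA2_commutator IAphi IApsi inv_phi.2.2 inv_psi.2.2.
Qed.

End Subgroups.

Section Xi.
Variables (n : nat) (i j : 'I_n).
Hypothesis neq_ij : i != j.
Local Open Scope group_scope.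

Definition xiV : endo n :=
  [ffun l => if l == i then [:: (j, false); (i, false); (j, true)] else [:: (l, false)]].

Lemma reducedb_conjugate_letter b : reducedb [:: (j, b); (i, false); (j, ~~ b)].
Proof.
rewrite /= /linv /= andbT; apply/andP; split; apply/negP => /eqP[E].
  by move: neq_ij; rewrite E eqxx.
by move: neq_ij; rewrite E eqxx.
Qed.

Lemma fmorph_xi l : fmorph (xi i j) (X l) = if l == i then X i ^ X j else X l.
Proof.
apply: fmorph_X; rewrite ffunE; case: ifP => // _.
by rewrite /= /fmul reduce_catr reduce_id // (reducedb_conjugate_letter true).
Qed.

Lemma fmorph_xiV l : fmorph xiV (X l) = if l == i then X i ^ (X j)^-1 else X l.
Proof.
apply: fmorph_X; rewrite ffunE; case: ifP => // _.
by rewrite /= /fmul reduce_catr reduce_id // (reducedb_conjugate_letter false).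
Qed.

Lemma xi_IA1 : IA 1 (xi i j).
Proof.
apply: IA_generators => l; rewrite fmorph_xi.
case: ifP => [/eqP-> | _]; last exact: eq_lcs_refl.
by rewrite /eq_lcs -commgEl; apply/in_lcsR/in_lcs0.
Qed.

Lemma xi_aut : is_aut (xi i j).
Proof.
have neq_ji : (j == i) = false by rewrite eq_sym; apply: negbTE.
have reduced_xi b : reduced_endo
    [ffun l => if l == i then [:: (j, b); (i, false); (j, ~~ b)] else [:: (l, false)]].
  by move=> l; rewrite ffunE; case: ifP => // _; apply: reducedb_conjugate_letter.
split; first exact: (reduced_xi true).
exists xiV; split; first exact: (reduced_xi false).
split; apply: ecomp_eq_eid => l.
  rewrite fmorph_xiV; case: ifP => [/eqP-> | neq_li]; last by rewrite fmorph_xi neq_li.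
  by rewrite gmulfJ gmulfV /= !fmorph_xi eqxx neq_ji conjgK.
rewrite fmorph_xi; case: ifP => [/eqP-> | neq_li]; last by rewrite fmorph_xiV neq_li.
by rewrite gmulfJ /= !fmorph_xiV eqxx neq_ji conjgKV.
Qed.

Lemma xi_Andreadakis1 : Andreadakis 1 (xi i j).
Proof. by apply/AndreadakisE; split; [exact: xi_aut | exact: xi_IA1]. Qed.

End Xi.

Lemma PSigma_Andreadakis1 n (phi : endo n) : PSigma phi -> Andreadakis 1 phi.
Proof.
apply: agen_sub; first exact: is_subgroup_Andreadakis.
by move=> _ [i [j [neq_ij ->]]]; apply: xi_Andreadakis1.
Qed.

Section DerivedSubgroup.
Variables (n : nat) (B : endo n -> Prop).

Lemma DerivedSub_sub : is_subgroup B -> forall phi, DerivedSub B phi -> B phi.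
Proof.
move=> subB; have [_ [BM BV]] := subB; apply: agen_sub subB _.
move=> _ [phi [psi [phi' [psi' [Bphi [Bpsi [inv_phi [inv_psi ->]]]]]]]].
exact: BM _ _ (BM _ _ (BV _ _ Bphi inv_phi) (BV _ _ Bpsi inv_psi)) (BM _ _ Bphi Bpsi).
Qed.

Lemma DerivedSub_Andreadakis2 :
  (forall phi, B phi -> Andreadakis 1 phi) -> forall phi, DerivedSub B phi -> Andreadakis 2 phi.
Proof.
move=> BA1; apply: agen_sub (is_subgroup_Andreadakis n 2) _.
move=> _ [phi [psi [phi' [psi' [Bphi [Bpsi [inv_phi [inv_psi ->]]]]]]]].
exact: Andreadakis2_commutator (BA1 _ Bphi) (BA1 _ Bpsi) inv_phi inv_psi.
Qed.

End DerivedSubgroup.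

Theorem proposition2p2p7 (n : nat) (Hn : 2 <= n) (B : endo n -> Prop) :
  is_subgroup B -> (forall phi, B phi -> PSigma phi) -> tau1_injective B ->
  forall phi, (Andreadakis 2 phi /\ B phi) <-> DerivedSub B phi.
Proof.
move=> subB BP tau_inj phi; split=> [[A2phi Bphi] | Dphi].
  have [[Rphi _] _] := A2phi; rewrite -(ecomp_eidl Rphi).
  apply: (tau_inj (eid n)) => //; first exact: subB.1.
    exact: is_inverse_eid.
  by rewrite ecomp_eidl.
split; last exact: DerivedSub_sub.
by apply: DerivedSub_Andreadakis2 Dphi => psi /BP /PSigma_Andreadakis1.
Qed.
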